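(* Let $\mathbb{Z}$ be as in the context and let $\kappa:\mathbb{Z}\times\mathbb{Z}\to\mathbb{R}_{>0}$ be a continuous kernel bounded below by a constant $\kappa_\wedge>0$. Then for any Borel probability measure $\mu$ on $\mathbb{Z}$ and any $f,g\in C(\mathbb{Z})$, $$\|\mathcal{K}_\mu[f]-\mathcal{K}_\mu[g]\|\le\|f-g\|.$$ Consequently, $\bar{\mathcal{T}}_\mu:=\mathcal{K}_\mu\circ\bar{\mathcal{T}}:C(\mathbb{Z})\to C(\mathbb{Z})$ is a $\gamma$-contraction in $\|\cdot\|$, and it has a unique fixed point $q^*_\mu\in C(\mathbb{Z})$ with $\|q^*_\mu\|\le 1/(1-\gamma)$.
   Context: Spaces. Let $\gamma\in(0,1)$, let $\mathbb{X}\subset\mathbb{R}^{d_{\mathbb{X}}}$ be nonempty and compact, and let $\mathbb{A}$ be a nonempty compact subset of some $\mathbb{R}^{d_{\mathbb{A}}}$ or a finite set. Put $\mathbb{Z}=\mathbb{X}\times\mathbb{A}$. $C(\mathbb{Z})$ is the space of continuous real functions with the sup norm $\|\cdot\|$. Smoothing operator. $\mathcal{K}_\mu[q](z)=\int\kappa(z,u)q(u)\mu(du)/\int\kappa(z,u)\mu(du)$. Bellman operator. $P(\cdot\mid x,a)$ is a transition kernel on $\mathbb{X}$ with $P(B\mid z)=\psi(\{w:f(z,w)\in B\})$, where $f:\mathbb{Z}\times\mathbb{W}\to\mathbb{X}$ is continuous and $\psi$ is a probability measure on a Borel set $\mathbb{W}\subset\mathbb{R}^{d_{\mathbb{W}}}$.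 The function $r\in C(\mathbb{Z})$ has $\|r\|\le1$. The clipping map is $\Pi(y)=\max\{\min\{y,1/(1-\gamma)\},-1/(1-\gamma)\}$, and $\bar{\mathcal{T}}[Q](x,a)=r(x,a)+\gamma\int_{\mathbb{X}}\max_{a'\in\mathbb{A}}\Pi(Q(x',a'))\,P(dx'\mid x,a)$. Under these assumptions, $\bar{\mathcal{T}}$ maps $C(\mathbb{Z})$ into itself and is a $\gamma$-contraction in $\|\cdot\|$. *)

From HB Require Import structures.
From mathcomp Require Import all_boot all_order all_algebra.
From mathcomp Require Import all_classical all_reals all_analysis.
Set Implicit Arguments. Unset Strict Implicit. Unset Printing Implicit Defensive.
Import Order.TTheory GRing.Theory Num.Theory.
Import numFieldNormedType.Exports.
Local Open Scope classical_set_scope.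
Local Open Scope ring_scope.

(* Ambient space of state-action pairs: R^dX x R^dA (product topology). *)
Definition ZT (R : realType) (dX dA : nat) := ('rV[R]_dX * 'rV[R]_dA)%type.

Definition ZB (R : realType) (dX dA : nat) :=
  g_sigma_algebraType (@open (ZT R dX dA)).

Definition WB (R : realType) (dW : nat) :=
  g_sigma_algebraType (@open 'rV[R]_dW).

Definition Cfun {T : topologicalType} (R : realType) (Z : set T) (q : T -> R) :=
  {within Z, continuous q}.

Definition supnorm {T : Type} (R : realType) (Z : set T) (q : T -> R) : R :=
  sup [set `|q z| | z in Z].

Definition clip (R : realType) (gamma : R) (y : R) : R :=
  Num.max (Num.min y (1 / (1 - gamma))) (- (1 / (1 - gamma))).

Definition smooth (R : realType) (dX dA : nat) (Z : set (ZT R dX dA))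
  (kappa : ZT R dX dA * ZT R dX dA -> R) (mu : {measure set (ZB R dX dA) -> \bar R})
  (q : ZT R dX dA -> R) (z : ZT R dX dA) : R :=
  Rintegral mu (Z : set (ZB R dX dA)) (fun u : ZB R dX dA => kappa (z, u) * q u) /
  Rintegral mu (Z : set (ZB R dX dA)) (fun u : ZB R dX dA => kappa (z, u)).

(* Bellman operator: the integral against P(dx'|z), where P(.|z) is the
   image of psi under w |-> f(z,w), written as the integral over W against psi. *)
Definition bellman (R : realType) (dX dA dW : nat) (gamma : R)
  (A : set 'rV[R]_dA) (W : set 'rV[R]_dW)
  (psi : {measure set (WB R dW) -> \bar R})
  (f : ZT R dX dA * 'rV[R]_dW -> 'rV[R]_dX) (r : ZT R dX dA -> R)
  (Q : ZT R dX dA -> R) (z : ZT R dX dA) : R :=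
  r z + gamma * Rintegral psi (W : set (WB R dW))
    (fun w : WB R dW => sup [set clip gamma (Q (f (z, w), a')) | a' in A]).

From HB Require Import structures.
From mathcomp Require Import all_boot all_order all_algebra.
From mathcomp Require Import all_classical all_reals all_analysis.
From mathcomp Require Import ring lra measurable_realfun.
Import Order.TTheory GRing.Theory Num.Theory.
Import numFieldNormedType.Exports.
Local Open Scope classical_set_scope.
Local Open Scope ring_scope.

(* K_mu averages with the positive weights kappa (z, .) / int kappa (z, u) dmu(u),
   so it is nonexpansive for the sup norm on Z; the Bellman operator is a
   gamma-contraction since clipping, the supremum over a' and integration against
   the probability psi are all 1-Lipschitz.  Both operators preserve continuity on
   the compact Z: kappa and Q are uniformly continuous there (tube lemma) and the
   integrals are continuous in the parameter by dominated convergence.  The fixed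
   point is the uniform limit of the Picard iterates of T_mu started at 0, hence
   continuous, and |T Q| <= 1 + gamma / (1 - gamma) = 1 / (1 - gamma) together with
   nonexpansiveness of K_mu gives the bound on q*_mu. *)

Section sup_image.
Context {R : realType} {T : Type} {A : set T}.
Implicit Types (F G : T -> R) (B e : R).

Lemma sup_image_le_add F G B e : A !=set0 ->
  (forall a, A a -> G a <= B) -> (forall a, A a -> F a <= G a + e) ->
  sup [set F a | a in A] <= sup [set G a | a in A] + e.
Proof.
move=> [a0 Aa0] GB FG; apply: ge_sup; first by exists (F a0), a0.
move=> _ [a Aa <-]; apply: (le_trans (FG a Aa)); rewrite lerD2r.
apply: ub_le_sup; last by exists a.
by exists B => _ [b Ab <-]; exact: GB.
Qed.

Lemma norm_sup_image_le F B : A !=set0 ->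
  (forall a, A a -> `|F a| <= B) -> `|sup [set F a | a in A]| <= B.
Proof.
move=> [a0 Aa0] FB.
have FB' a : A a -> - B <= F a <= B by rewrite -ler_norml; exact: FB.
rewrite ler_norml; apply/andP; split.
  have /andP[+ _] := FB' a0 Aa0; move/le_trans; apply.
  apply: ub_le_sup; last by exists a0.
  by exists B => _ [b /FB' /andP[_ ?] <-].
apply: ge_sup; first by exists (F a0), a0.
by move=> _ [b /FB' /andP[_ ?] <-].
Qed.

Lemma dist_sup_image_le F G B e : A !=set0 ->
  (forall a, A a -> `|F a| <= B) -> (forall a, A a -> `|G a| <= B) ->
  (forall a, A a -> `|F a - G a| <= e) ->
  `|sup [set F a | a in A] - sup [set G a | a in A]| <= e.
Proof.
move=> A0 FB GB FG; have ub H a : A a -> `|H a| <= B -> H a <= B.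
  by move=> _; rewrite ler_norml => /andP[].
have FG' a : A a -> G a - e <= F a <= G a + e.
  by move=> Aa; have := FG a Aa; rewrite ler_norml => /andP[? ?]; apply/andP; split; lra.
rewrite ler_norml; apply/andP; split.
  suff : sup [set G a | a in A] <= sup [set F a | a in A] + e by lra.
  apply: (sup_image_le_add _ _ B) => // a Aa; first exact: ub (FB a Aa).
  by have /andP[? _] := FG' a Aa; lra.
suff : sup [set F a | a in A] <= sup [set G a | a in A] + e by lra.
apply: (sup_image_le_add _ _ B) => // a Aa; first exact: ub (GB a Aa).
by have /andP[_ ?] := FG' a Aa.
Qed.

End sup_image.

Section supnorm.
Context {R : realType} {T : Type} {Z : set T}.
Implicit Types (q : T -> R) (M : R).

Lemma norm_le_supnorm {q M z} : (forall u, Z u -> `|q u| <= M) -> Z z ->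
  `|q z| <= supnorm Z q.
Proof.
move=> qM Zz; apply: ub_le_sup; last by exists z.
by exists M => _ [y Zy <-]; exact: qM.
Qed.

Lemma supnorm_le q M : Z !=set0 -> (forall z, Z z -> `|q z| <= M) ->
  supnorm Z q <= M.
Proof.
move=> [z0 Zz0] qM; apply: ge_sup; first by exists `|q z0|, z0.
by move=> _ [y Zy <-]; exact: qM.
Qed.

Lemma eq_supnorm q1 q2 : (forall z, Z z -> q1 z = q2 z) ->
  supnorm Z q1 = supnorm Z q2.
Proof.
by move=> q12; rewrite /supnorm (eq_imagel (f' := fun z => `|q2 z|)) // => z /q12 ->.
Qed.

End supnorm.

Section clip.
Context {R : realType} (gamma : R).

Lemma dist_clip_le x y : `|clip gamma x - clip gamma y| <= `|x - y|.
Proof.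
rewrite /clip; set c := 1 / (1 - gamma).
have := ler_norm (x - y); have := ler_norm (y - x); rewrite distrC.
rewrite /Num.min /Num.max; do 4 case: ifPn; rewrite ?ltNge ?negbK => *;
  rewrite ler_norml; apply/andP; split; lra.
Qed.

Lemma norm_clip_le x : gamma < 1 -> `|clip gamma x| <= 1 / (1 - gamma).
Proof.
move=> g1; have c0 : 0 <= 1 / (1 - gamma) by rewrite divr_ge0 // subr_ge0 ltW.
rewrite /clip ler_norml le_max lexx orbT ge_max ge_min lexx orbT /=; lra.
Qed.

End clip.

Section geometric.
Context {R : realType} {g : R}.
Hypothesis g01 : 0 <= g < 1.

Let g1 : 0 < 1 - g. Proof. by case/andP: g01 => _; rewrite subr_gt0. Qed.

Lemma geometric_lt C {e : R} : 0 < e -> exists n : nat, C * g ^+ n < e.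
Proof.
move=> e0; have /andP[g0 g_lt1] := g01.
have : C * g ^+ n @[n --> \oo] --> 0.
  rewrite -(mulr0 C); apply: cvgM; first exact: cvg_cst.
  by apply: cvg_expr; rewrite ger0_norm.
move/cvgrPdist_lt => /(_ e e0) [N _ HN]; exists N; have := HN N (leqnn N).
by rewrite sub0r normrN; apply: le_lt_trans; exact: ler_norm.
Qed.

Lemma eq0_geometric_bound (x C : R) : (forall n, `|x| <= C * g ^+ n) -> x = 0.
Proof.
move=> xC; apply/eqP; rewrite -normr_le0; apply/ler_addgt0Pr => e e0.
by have [n /ltW Cn] := geometric_lt C e0; rewrite add0r (le_trans (xC n)).
Qed.

Section geometric_steps.
Context {u : R^nat} {d : R}.
Hypothesis du : forall n, `|u n.+1 - u n| <= d * g ^+ n.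

Let tail n := d * g ^+ n / (1 - g).

Let tail_ge0 n : 0 <= tail n.
Proof. by rewrite divr_ge0 ?(ltW g1) // (le_trans _ (du n)). Qed.

Lemma geometric_steps_dist {n m : nat} : (n <= m)%N -> `|u m - u n| <= tail n.
Proof.
(* The distance travelled plus the remaining tail never exceeds the initial tail. *)
suff inv k : `|u (n + k)%N - u n| + tail (n + k) <= tail n.
  by move=> /subnKC <-; apply: le_trans _ (inv (m - n)%N); rewrite lerDl.
elim: k => [|k IH]; first by rewrite addn0 subrr normr0 add0r.
apply: le_trans IH; rewrite addnS.
have split_tail : tail (n + k) = d * g ^+ (n + k) + tail (n + k).+1.
  by rewrite /tail exprS; field; rewrite gt_eqF.
rewrite split_tail addrA lerD2r (addrC _ (d * _)).
by apply: le_trans (ler_distD (u (n + k)%N) _ _) _; rewrite lerD2r.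
Qed.

Lemma geometric_steps_cvg : cvgn u.
Proof.
apply/cauchy_cvgP/cauchy_ballP => e e0.
have [N HN] := geometric_lt (2 * d / (1 - g)) e0.
pose U := [set u n | n in [set n | (N <= n)%N]].
exists (U, U); first by split; exists N => // n /= Nn; exists n.
move=> [_ _] [[n Nn <-] [m Nm <-]] /=; rewrite -ball_normE /ball_ /=.
apply: le_lt_trans (ler_distD (u N) _ _) _.
apply: le_lt_trans (lerD (geometric_steps_dist Nn) _) _.
  by rewrite distrC; exact: geometric_steps_dist Nm.
by apply: le_lt_trans HN; rewrite le_eqVlt /tail; apply/orP; left; apply/eqP; field;
  rewrite gt_eqF.
Qed.

Lemma geometric_steps_lim_dist n : `|limn u - u n| <= tail n.
Proof.
have : `|u m - u n| @[m --> \oo] --> `|limn u - u n|.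
  by apply: cvg_norm; apply: cvgB; [exact: geometric_steps_cvg | exact: cvg_cst].
apply: (closed_cvg _ (@closed_le R (tail n))).
by exists n => // m /= nm; exact: geometric_steps_dist.
Qed.

End geometric_steps.
End geometric.

Lemma within_continuous_comp_in {T U V : topologicalType} {A : set T} {B : set U}
    {k : T -> U} {h : U -> V} :
  {within A, continuous k} -> {within B, continuous h} ->
  (forall x, A x -> B (k x)) -> {within A, continuous (h \o k)}.
Proof.
move=> ck ch kAB; apply/subspace_continuousP => x Ax O nO.
have := (subspace_continuousP _ _).1 ch (k x) (kAB x Ax) O nO.
move=> /((subspace_continuousP _ _).1 ck x Ax).
rewrite /= !nbhs_simpl /within /=.
by apply: filterS => y hy Ay; exact: hy Ay (kAB y Ay).
Qed.

Section within_continuous_setX.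
Context {T1 T2 U : topologicalType} {S : set T1} {K : set T2} {F : T1 * T2 -> U}.
Hypothesis cF : {within S `*` K, continuous F}.

Lemma within_continuous_setX_snd {x} : S x -> {within K, continuous (fun y => F (x, y))}.
Proof.
move=> Sx; apply: (within_continuous_comp_in (k := pair x) _ cF) => //.
by apply: continuous_subspaceT => y; exact: cvg_pair (cvg_cst x) cvg_id.
Qed.

Lemma within_continuous_setX_fst {y} : K y -> {within S, continuous (fun x => F (x, y))}.
Proof.
move=> Ky; apply: (within_continuous_comp_in (k := pair^~ y) _ cF) => //.
by apply: continuous_subspaceT => x; exact: cvg_pair cvg_id (cvg_cst y).
Qed.

End within_continuous_setX.

Lemma within_continuous_unif_near {R : realType} {T1 T2 : topologicalType}
    {S : set T1} {K : set T2} {F : T1 * T2 -> R} {x e} :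
  compact K -> {within S `*` K, continuous F} -> S x -> 0 < e ->
  \forall x' \near x, S x' -> forall y, K y -> `|F (x', y) - F (x, y)| < e.
Proof.
move=> cK cF Sx e0; have e2 : 0 < e / 2 by rewrite divr_gt0.
suff : \forall x' \near x, K `<=` (fun y => S x' -> `|F (x', y) - F (x, y)| < e).
  by apply: filterS => x' Kx' Sx' y Ky; exact: Kx'.
apply: ((near_covering_withinP K).2 ((compact_near_coveringP K).1 cK)).
move=> y Ky.
have := (subspace_continuousP _ F).1 cF (x, y) (conj Sx Ky).
move/cvgrPdist_lt => /(_ _ e2) [[P Q] /= [nP nQ] PQ].
exists (Q, P) => // -[y' x'] [Qy' Px'] Ky' Sx' /=.
have dx' := PQ (x', y') (conj Px' Qy') (conj Sx' Ky').
have dx := PQ (x, y') (conj (nbhs_singleton nP) Qy') (conj Sx Ky').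
rewrite /= in dx dx'; rewrite (splitr e).
apply: le_lt_trans (ler_distD (F (x, y)) _ _) _.
by rewrite distrC ltrD.
Qed.

Lemma within_continuous_cvg_seq {T U : topologicalType} (Z : set T) (h : T -> U)
    (u : nat -> T) z :
  {within Z, continuous h} -> Z z -> (forall n, Z (u n)) ->
  u n @[n --> \oo] --> z -> h (u n) @[n --> \oo] --> h z.
Proof.
move=> ch Zz Zu uz; apply: cvg_comp ((subspace_continuousP _ _).1 ch z Zz).
move=> P /uz ZP; have {}ZP : \forall n \near \oo, Z (u n) -> P (u n) by [].
by apply: filterS ZP => n /(_ (Zu n)).
Qed.

Lemma seq_continuous_within {R : realType} {T : pseudoMetricType R} (Z : set T)
    (h : T -> R) :
  (forall z (u : nat -> T), Z z -> (forall n, Z (u n)) ->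
     u n @[n --> \oo] --> z -> h (u n) @[n --> \oo] --> h z) ->
  {within Z, continuous h}.
Proof.
move=> hseq; apply/subspace_continuousP => z Zz; apply/cvgrPdist_lt => e e0.
apply: contrapT => not_near.
have far n : exists y, [/\ ball z n.+1%:R^-1 y, Z y & e <= `|h z - h y|].
  apply: contrapT => no_far; apply: not_near.
  rewrite near_withinE; apply/nbhs_ballP; exists n.+1%:R^-1 => /=.
    by rewrite invr_gt0.
  by move=> y zy Zy; rewrite ltNge; apply/negP => ey; apply: no_far; exists y.
have [u uP] := choice far.
have uz : u n @[n --> \oo] --> z.
  apply/cvg_ballP => eps eps0; have := near_infty_natSinv_lt (PosNum eps0).
  by apply: filterS => n /= ?; case: (uP n) => + _ _; apply: le_ball; exact: ltW.
have := hseq z u Zz (fun n => let: And3 _ Zn _ := uP n in Zn) uz.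
move=> /cvgrPdist_lt /(_ e e0) [N _ /(_ N (leqnn N))].
by case: (uP N) => _ _; rewrite ltNge => ->.
Qed.

Lemma within_continuous_unif_approx {R : realType} {T : topologicalType} (Z : set T)
    (g : T -> R) :
  (forall e, 0 < e -> exists2 h, {within Z, continuous h} &
     forall z, Z z -> `|g z - h z| <= e) ->
  {within Z, continuous g}.
Proof.
move=> approx; apply/subspace_continuousP => z Zz; apply/cvgrPdist_lt => e e0.
have e3 : 0 < e / 3 by rewrite divr_gt0.
have [h ch gh] := approx _ e3.
move/subspace_continuousP/(_ z Zz)/cvgrPdist_lt/(_ _ e3) : ch.
rewrite !near_withinE; apply: filterS => t ht Zt.
have := ht Zt; have := gh z Zz; have := gh t Zt.
have := ler_distD (h t) (g z) (g t); have := ler_distD (h z) (g z) (h t).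
rewrite (distrC (h t)); lra.
Qed.

Section continuous_algebra.
Context {R : realType} {T : topologicalType} {Z : set T}.
Implicit Types q : T -> R.

Lemma Cfun_cst (k : R) : Cfun Z (fun=> k).
Proof. by move=> ?; exact: cvg_cst. Qed.

Lemma CfunB {q1 q2} : Cfun Z q1 -> Cfun Z q2 -> Cfun Z (q1 \- q2).
Proof. by move=> c1 c2 x; apply: cvgB; [exact: c1 | exact: c2]. Qed.

Lemma CfunM {q1 q2} : Cfun Z q1 -> Cfun Z q2 -> Cfun Z (q1 \* q2).
Proof. by move=> c1 c2 x; apply: cvgM; [exact: c1 | exact: c2]. Qed.

End continuous_algebra.

Section continuous_on_compact.
Context {R : realType} {T : topologicalType} {Z : set T}.
Hypothesis cZ : compact Z.

Lemma Cfun_bounded {q : T -> R} : Cfun Z q -> exists M, forall z, Z z -> `|q z| <= M.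
Proof.
move=> cq; have [M [_ HM]] := compact_bounded (continuous_compact cq cZ).
exists (`|M| + 1) => z Zz; apply: (HM (`|M| + 1)); last by exists z.
by rewrite (le_lt_trans (ler_norm M)) // ltrDl.
Qed.

Lemma Cfun_norm_le_supnorm {q : T -> R} {z} : Cfun Z q -> Z z -> `|q z| <= supnorm Z q.
Proof. by move=> /Cfun_bounded [M qM] Zz; exact: norm_le_supnorm qM Zz. Qed.

Lemma Cfun_dist_le_supnorm {q1 q2 : T -> R} {z} : Cfun Z q1 -> Cfun Z q2 -> Z z ->
  `|q1 z - q2 z| <= supnorm Z (q1 \- q2).
Proof. by move=> c1 c2 Zz; have := Cfun_norm_le_supnorm (CfunB c1 c2) Zz. Qed.

End continuous_on_compact.

Section borel_measurability.
Context {R : realType} {T : normedModType R}.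
Local Notation BT := (g_sigma_algebraType (@open T)).

Lemma closed_borel_measurable {Z : set T} : closed Z -> measurable (Z : set BT).
Proof.
move=> clZ; rewrite -[Z]setCK; apply: measurableC; apply: sub_sigma_algebra.
exact: closed_openC.
Qed.

Lemma Cfun_measurable {D : set T} {q : T -> R} :
  measurable (D : set BT) -> Cfun D q -> measurable_fun (D : set BT) q.
Proof.
move=> mD /continuousP cq.
apply: (@measurability _ _ BT R D q _ (RGenOpens.measurableE R)).
move=> _ [_ [a [b ->] <-]].
have /open_subspaceP [V oV VD] :=
  cq _ (@interval_open R (BRight a) (BLeft b) erefl erefl).
by rewrite setIC -VD; apply: measurableI => //; exact: sub_sigma_algebra.
Qed.

End borel_measurability.

Section integral_bounds.
Context {R : realType} {d} {T : measurableType d} {mu : {measure set T -> \bar R}}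
  {D : set T}.
Hypotheses (mD : measurable D) (muD : mu D = 1%E).

Lemma bounded_integrable (h : T -> R) M : measurable_fun D h ->
  (forall x, D x -> `|h x| <= M) -> mu.-integrable D (EFin \o h).
Proof.
move=> mh hM; apply: measurable_bounded_integrable => //; first by rewrite muD ltry.
exists M; split; first exact: num_real.
by move=> y My x Dx; rewrite /= (le_trans (hM x Dx)) // ltW.
Qed.

Lemma norm_Rintegral_mul_le (k h : T -> R) M :
  mu.-integrable D (EFin \o k) -> mu.-integrable D (EFin \o (k \* h)) ->
  (forall x, D x -> 0 <= k x) -> (forall x, D x -> `|h x| <= M) ->
  `|Rintegral mu D (k \* h)| <= M * Rintegral mu D k.
Proof.
move=> ik ikh k0 hM.
have iMk c : mu.-integrable D (EFin \o (fun x => c * k x)).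
  by apply: eq_integrable mD _ _ _ (integrableZl mD c ik) => x _.
have kh_le x : D x -> - (M * k x) <= k x * h x <= M * k x.
  by move=> Dx; rewrite -ler_norml normrM ger0_norm ?k0 // mulrC ler_wpM2r ?k0 ?hM.
rewrite ler_norml -mulNr -!RintegralZl //; apply/andP; split.
all: by apply: le_Rintegral => // x /kh_le; rewrite -mulNr => /andP[].
Qed.

Lemma norm_Rintegral_le (h : T -> R) M : mu.-integrable D (EFin \o h) ->
  (forall x, D x -> `|h x| <= M) -> `|Rintegral mu D h| <= M.
Proof.
move=> ih hM; apply: le_trans (le_normr_Rintegral mD ih) _.
have -> : M = Rintegral mu D (cst M) by rewrite Rintegral_cst // muD mulr1.
apply: le_Rintegral => //; first exact: integrable_norm.
by apply: (bounded_integrable (cst M) `|M|) => //; exact: measurable_cst.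
Qed.

End integral_bounds.

Lemma Rintegral_param_continuous {R : realType} {T : pseudoMetricType R} {d}
    {U : measurableType d} {mu : {measure set U -> \bar R}} {D : set U} {S : set T}
    {F : T -> U -> R} (c : R) :
  measurable D -> mu D = 1%E ->
  (forall t, S t -> measurable_fun D (F t)) ->
  (forall w, D w -> {within S, continuous F ^~ w}) ->
  (forall t w, S t -> D w -> `|F t w| <= c) ->
  {within S, continuous (fun t => Rintegral mu D (F t))}.
Proof.
move=> mD muD mF cF Fc; apply: seq_continuous_within => z u Sz Su uz.
have mEF t : S t -> measurable_fun D (EFin \o F t) by move/mF/measurable_EFinP.
have ic : mu.-integrable D (EFin \o cst c).
  by apply: (bounded_integrable mD muD (cst c) `|c|) => //; exact: measurable_cst.
have Fu_cvg : {ae mu, forall w, D w -> (F (u n) w)%:E @[n --> \oo] --> (F z w)%:E}.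
  apply: aeW => w Dw; apply: cvg_EFin; first exact: nearW.
  exact: within_continuous_cvg_seq (cF w Dw) Sz Su uz.
have Fu_le : {ae mu, forall w n, D w -> (`|(F (u n) w)%:E| <= (EFin \o cst c) w)%E}.
  by apply: aeW => w n Dw; rewrite /= lee_fin; exact: Fc.
have [iFz _ int_cvg] := dominated_convergence mD (fun n => mEF _ (Su n)) (mEF _ Sz)
  Fu_cvg ic Fu_le.
by apply: fine_cvg; rewrite fineK //; exact: integrable_fin_num.
Qed.

Section contraction_fixed_point.
Context {R : realType} {T : topologicalType} {Z : set T} {Phi : (T -> R) -> T -> R}
  {g : R}.
Hypotheses (cZ : compact Z) (Z0 : Z !=set0) (g01 : 0 <= g < 1)
  (Phi_cont : forall Q, Cfun Z Q -> Cfun Z (Phi Q))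
  (Phi_contr : forall Q1 Q2, Cfun Z Q1 -> Cfun Z Q2 ->
     supnorm Z (Phi Q1 \- Phi Q2) <= g * supnorm Z (Q1 \- Q2)).

Let g0 : 0 <= g. Proof. by case/andP: g01. Qed.

Let picard n := iter n Phi (fun=> 0).

Let Cfun_picard n : Cfun Z (picard n).
Proof. by elim: n => [|n IH] /=; [exact: Cfun_cst | exact: Phi_cont]. Qed.

Let d := supnorm Z (picard 1 \- picard 0).

Let picard_step n z : Z z -> `|picard n.+1 z - picard n z| <= d * g ^+ n.
Proof.
move=> Zz; apply: le_trans (Cfun_dist_le_supnorm cZ (Cfun_picard _) (Cfun_picard _) Zz) _.
elim: n => [|n IH]; first by rewrite expr0 mulr1.
apply: le_trans (Phi_contr _ _ (Cfun_picard n.+1) (Cfun_picard n)) _.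
by rewrite exprS mulrCA ler_wpM2l.
Qed.

Let tail n := d * g ^+ n / (1 - g).

Let picard_lim z := limn (picard ^~ z).

Let picard_lim_dist n z : Z z -> `|picard_lim z - picard n z| <= tail n.
Proof.
by move=> Zz; exact: (geometric_steps_lim_dist g01 (fun n => picard_step n z Zz)).
Qed.

Let Cfun_picard_lim : Cfun Z picard_lim.
Proof.
apply: within_continuous_unif_approx => e e0.
have [n dn] := geometric_lt g01 (d / (1 - g)) e0.
exists (picard n) => [|z Zz]; first exact: Cfun_picard.
apply: le_trans (picard_lim_dist n z Zz) _.
by rewrite /tail mulrAC ltW.
Qed.

Lemma Cfun_contraction_fixed_point :
  exists2 q, Cfun Z q & forall z, Z z -> Phi q z = q z.
Proof.
exists picard_lim => // z Zz; apply/subr0_eq.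
apply: (eq0_geometric_bound g01 _ (2 * (d * g / (1 - g)))) => n.
have Phi_dist : `|Phi picard_lim z - picard n.+1 z| <= tail n.+1.
  have Phi_lim_cont := Phi_cont _ Cfun_picard_lim.
  apply: le_trans (Cfun_dist_le_supnorm cZ Phi_lim_cont (Cfun_picard _) Zz) _.
  apply: le_trans (Phi_contr _ _ Cfun_picard_lim (Cfun_picard n)) _.
  have -> : tail n.+1 = g * tail n by rewrite /tail exprS; ring.
  rewrite ler_wpM2l //; apply: supnorm_le Z0 _ => u Zu; exact: picard_lim_dist.
apply: le_trans (ler_distD (picard n.+1 z) _ _) _.
have -> : 2 * (d * g / (1 - g)) * g ^+ n = tail n.+1 + tail n.+1.
  by rewrite /tail exprS; ring.
by rewrite lerD // distrC picard_lim_dist.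
Qed.

Lemma Cfun_contraction_fixed_point_unique {q1 q2} :
  Cfun Z q1 -> Cfun Z q2 -> (forall z, Z z -> Phi q1 z = q1 z) ->
  (forall z, Z z -> Phi q2 z = q2 z) -> forall z, Z z -> q1 z = q2 z.
Proof.
move=> c1 c2 fix1 fix2 z Zz; set S := supnorm Z (q1 \- q2).
have S_le : S <= g * S.
  rewrite {1}(_ : S = supnorm Z (Phi q1 \- Phi q2)); first exact: Phi_contr.
  by apply: eq_supnorm => u Zu /=; rewrite fix1 ?fix2.
apply/subr0_eq/(eq0_geometric_bound g01 _ S) => n.
apply: le_trans (Cfun_dist_le_supnorm cZ c1 c2 Zz) _.
elim: n => [|n IH]; first by rewrite mulr1.
by rewrite exprS mulrCA; apply: le_trans S_le _; rewrite ler_wpM2l.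
Qed.

End contraction_fixed_point.

Section smoothing.
Context {R : realType} {dX dA : nat}.
Local Notation T := ('rV[R]_dX * 'rV[R]_dA)%type.
Context {Z : set T} {kappa : T * T -> R} {kmin : R} {mu : probability (ZB R dX dA) R}.
Hypotheses (cZ : compact Z) (ck : {within Z `*` Z, continuous kappa})
  (kmin_gt0 : 0 < kmin) (kmin_le : forall z u, Z z -> Z u -> kmin <= kappa (z, u))
  (muZ : mu (Z : set (ZB R dX dA)) = 1%E).
Local Notation BZ := (Z : set (ZB R dX dA)).
Local Notation K := (smooth Z kappa mu).
Local Notation mass z := (Rintegral mu BZ (fun u => kappa (z, u))).

Let mZ : measurable BZ.
Proof. exact: closed_borel_measurable (compact_closed (@norm_hausdorff R T) cZ). Qed.

Let Cfun_integrable {g} : Cfun Z g -> mu.-integrable BZ (EFin \o g).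
Proof.
move=> cg; have [M gM] := Cfun_bounded cZ cg.
exact: bounded_integrable mZ muZ _ _ (Cfun_measurable mZ cg) gM.
Qed.

Let kernel_Cfun {z} : Z z -> Cfun Z (fun u => kappa (z, u)).
Proof. by move=> Zz; have := within_continuous_setX_snd ck Zz. Qed.

Let mass_ge {z} : Z z -> kmin <= mass z.
Proof.
move=> Zz; have -> : kmin = Rintegral mu BZ (cst kmin).
  by rewrite Rintegral_cst // (_ : fine (mu BZ) = 1) ?mulr1 // muZ.
apply: le_Rintegral => //; last by move=> u; exact: kmin_le.
  exact/Cfun_integrable/Cfun_cst.
exact: Cfun_integrable (kernel_Cfun Zz).
Qed.

Lemma norm_smooth_le g M z : Cfun Z g -> (forall u, Z u -> `|g u| <= M) -> Z z ->
  `|K g z| <= M.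
Proof.
move=> cg gM Zz; have mass_gt0 := lt_le_trans kmin_gt0 (mass_ge Zz).
rewrite /smooth normrM normfV (gtr0_norm mass_gt0) ler_pdivrMr //.
apply: (norm_Rintegral_mul_le mZ (fun u => kappa (z, u)) g) => //.
- exact: Cfun_integrable (kernel_Cfun Zz).
- exact: Cfun_integrable (CfunM (kernel_Cfun Zz) cg).
- by move=> u Zu; exact: le_trans (ltW kmin_gt0) (kmin_le _ _ Zz Zu).
Qed.

Lemma smoothB g1 g2 z : Cfun Z g1 -> Cfun Z g2 -> Z z ->
  K g1 z - K g2 z = K (g1 \- g2) z.
Proof.
move=> c1 c2 Zz; rewrite /smooth -mulrBl -RintegralB //.
- by congr (_ / _); apply: eq_Rintegral => u _; rewrite /= mulrBr.
- exact: Cfun_integrable (CfunM (kernel_Cfun Zz) c1).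
- exact: Cfun_integrable (CfunM (kernel_Cfun Zz) c2).
Qed.

Lemma smooth_dist_le g1 g2 M z : Cfun Z g1 -> Cfun Z g2 ->
  (forall u, Z u -> `|g1 u - g2 u| <= M) -> Z z -> `|K g1 z - K g2 z| <= M.
Proof.
by move=> c1 c2 gM Zz; rewrite smoothB //; exact: norm_smooth_le (CfunB c1 c2) gM Zz.
Qed.

Let kernel_integral_continuous {g} : Cfun Z g ->
  Cfun Z (fun z => Rintegral mu BZ (fun u => kappa (z, u) * g u)).
Proof.
move=> cg; have [Mk kM] := Cfun_bounded (compact_setX cZ cZ) ck.
have [Mg gM] := Cfun_bounded cZ cg.
apply: (Rintegral_param_continuous (Mk * Mg) mZ muZ) => [z Zz|u Zu|z u Zz Zu].
- exact: Cfun_measurable mZ (CfunM (kernel_Cfun Zz) cg).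
- exact: CfunM (within_continuous_setX_fst ck Zu) (Cfun_cst _).
- by rewrite normrM ler_pM // ?gM // (kM (z, u)).
Qed.

Lemma smooth_continuous g : Cfun Z g -> Cfun Z (K g).
Proof.
move=> cg; have /subspace_continuousP cnum := kernel_integral_continuous cg.
have /subspace_continuousP cden : Cfun Z (fun z => mass z).
  have -> : (fun z => mass z) = fun z => Rintegral mu BZ (fun u => kappa (z, u) * 1).
    by apply: funext => z; apply: eq_Rintegral => u _; rewrite mulr1.
  exact: kernel_integral_continuous (Cfun_cst 1).
apply/subspace_continuousP => z Zz; apply: cvgM; first exact: cnum.
apply: cvgV; last exact: cden.
by rewrite gt_eqF // (lt_le_trans kmin_gt0 (mass_ge Zz)).
Qed.

End smoothing.

Definition clipped_max {R : realType} {dX dA : nat} (gamma : R) (A : set 'rV[R]_dA)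
    (Q : 'rV[R]_dX * 'rV[R]_dA -> R) (x : 'rV[R]_dX) : R :=
  sup [set clip gamma (Q (x, a)) | a in A].

Section bellman_operator.
Context {R : realType} {dX dA dW : nat}.
Local Notation T := ('rV[R]_dX * 'rV[R]_dA)%type.
Context {gamma : R} {X : set 'rV[R]_dX} {A : set 'rV[R]_dA} {W : set 'rV[R]_dW}
  {psi : probability (WB R dW) R} {f : T * 'rV[R]_dW -> 'rV[R]_dX} {r : T -> R}.
Hypotheses (gamma_ge0 : 0 <= gamma) (gamma_lt1 : gamma < 1)
  (A0 : A !=set0) (cA : compact A)
  (mW : measurable (W : set (WB R dW))) (psiW : psi (W : set (WB R dW)) = 1%E)
  (cf : {within (X `*` A) `*` W, continuous f})
  (fX : forall z w, (X `*` A) z -> W w -> X (f (z, w)))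
  (cr : {within X `*` A, continuous r}) (r_le1 : forall z, (X `*` A) z -> `|r z| <= 1).
Local Notation Z := (X `*` A).
Local Notation BW := (W : set (WB R dW)).
Local Notation c := (1 / (1 - gamma)).
Local Notation B := (bellman gamma A W psi f r).
Local Notation clipped_max := (@clipped_max R dX dA gamma A).

Lemma norm_clipped_max_le Q x : `|clipped_max Q x| <= c.
Proof. by apply: norm_sup_image_le A0 _ => a _; exact: norm_clip_le. Qed.

Lemma dist_clipped_max_le Q1 Q2 x1 x2 M :
  (forall a, A a -> `|Q1 (x1, a) - Q2 (x2, a)| <= M) ->
  `|clipped_max Q1 x1 - clipped_max Q2 x2| <= M.
Proof.
move=> QM; apply: (dist_sup_image_le _ _ c) => // a Aa; first exact: norm_clip_le.
- exact: norm_clip_le.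
- exact: le_trans (dist_clip_le _ _ _) (QM a Aa).
Qed.

Lemma clipped_max_continuous Q : Cfun Z Q -> {within X, continuous (clipped_max Q)}.
Proof.
move=> cQ; apply/subspace_continuousP => x Xx; apply/cvgrPdist_le => e e0.
have := within_continuous_unif_near cA cQ Xx e0.
rewrite near_withinE => Qnear; apply: (filterS _ Qnear) => x' Qx' Xx' /=.
rewrite /from_subspace distrC.
by apply: dist_clipped_max_le => a Aa; exact/ltW/Qx'.
Qed.

Let integrand Q z w := clipped_max Q (f (z, w)).

Let integrand_continuous_w {Q z} : Cfun Z Q -> Z z -> Cfun W (integrand Q z).
Proof.
move=> cQ Zz; exact (within_continuous_comp_in (within_continuous_setX_snd cf Zz)
  (clipped_max_continuous _ cQ) (fun w => fX z w Zz)).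
Qed.

Let integrand_continuous_z {Q w} : Cfun Z Q -> W w -> Cfun Z (integrand Q ^~ w).
Proof.
move=> cQ Ww; exact (within_continuous_comp_in (within_continuous_setX_fst cf Ww)
  (clipped_max_continuous _ cQ) (fun z Zz => fX z w Zz Ww)).
Qed.

Let integrand_measurable {Q z} : Cfun Z Q -> Z z -> measurable_fun BW (integrand Q z).
Proof. by move=> cQ Zz; exact: Cfun_measurable mW (integrand_continuous_w cQ Zz). Qed.

Let integrand_integrable {Q z} : Cfun Z Q -> Z z ->
  psi.-integrable BW (EFin \o integrand Q z).
Proof.
move=> cQ Zz; apply: (bounded_integrable mW psiW _ c) => //.
  exact: integrand_measurable.
by move=> w _; exact: norm_clipped_max_le.
Qed.

Lemma bellman_continuous Q : Cfun Z Q -> Cfun Z (B Q).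
Proof.
move=> cQ.
have /subspace_continuousP cI : Cfun Z (fun z => Rintegral psi BW (integrand Q z)).
  apply: (Rintegral_param_continuous c mW psiW) => [z Zz|w Ww|z w _ _].
  - exact: integrand_measurable.
  - exact: integrand_continuous_z.
  - exact: norm_clipped_max_le.
have /subspace_continuousP cr_at := cr.
apply/subspace_continuousP => z Zz; apply: cvgD; first exact: cr_at.
by apply: cvgM; [exact: cvg_cst | exact: cI].
Qed.

Lemma bellman_dist_le Q1 Q2 M z : Cfun Z Q1 -> Cfun Z Q2 ->
  (forall u, Z u -> `|Q1 u - Q2 u| <= M) -> Z z -> `|B Q1 z - B Q2 z| <= gamma * M.
Proof.
move=> c1 c2 QM Zz; rewrite /bellman opprD addrACA subrr add0r -mulrBr normrM.
rewrite (ger0_norm gamma_ge0) ler_wpM2l // -RintegralB //; last 2 first.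
- exact: integrand_integrable c1 Zz.
- exact: integrand_integrable c2 Zz.
apply: (norm_Rintegral_le mW psiW) => [|w Ww]; last first.
  by apply: dist_clipped_max_le => a Aa; apply: QM; split => //; exact: fX.
apply: (bounded_integrable mW psiW _ (c + c)).
  by apply: measurable_funB; exact: integrand_measurable.
move=> w _; apply: le_trans (ler_normB _ _) _.
by rewrite lerD // norm_clipped_max_le.
Qed.

Lemma norm_bellman_le Q z : Cfun Z Q -> Z z -> `|B Q z| <= c.
Proof.
move=> cQ Zz; rewrite /bellman; apply: le_trans (ler_normD _ _) _.
have -> : c = 1 + gamma * c by field; rewrite subr_eq0 eq_sym lt_eqF.
apply: lerD; first exact: r_le1.
rewrite normrM (ger0_norm gamma_ge0) ler_wpM2l //.
apply: (norm_Rintegral_le mW psiW); first exact: integrand_integrable cQ Zz.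
by move=> w _; exact: norm_clipped_max_le.
Qed.

End bellman_operator.

Theorem lemma1 (R : realType) (dX dA dW : nat) (gamma : R)
  (X : set 'rV[R]_dX) (A : set 'rV[R]_dA) (W : set 'rV[R]_dW)
  (psi : probability (WB R dW) R)
  (f : ZT R dX dA * 'rV[R]_dW -> 'rV[R]_dX) (r : ZT R dX dA -> R)
  (kappa : ZT R dX dA * ZT R dX dA -> R) (kmin : R) :
  0 < gamma < 1 ->
  X !=set0 -> compact X -> A !=set0 -> compact A ->
  measurable (W : set (WB R dW)) -> psi (W : set (WB R dW)) = 1%E ->
  {within (X `*` A) `*` W, continuous f} ->
  (forall z w, (X `*` A) z -> W w -> X (f (z, w))) ->
  {within X `*` A, continuous r} ->
  (forall z, (X `*` A) z -> `|r z| <= 1) ->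
  {within (X `*` A) `*` (X `*` A), continuous kappa} ->
  (forall z u, (X `*` A) z -> (X `*` A) u -> 0 < kappa (z, u)) ->
  0 < kmin ->
  (forall z u, (X `*` A) z -> (X `*` A) u -> kmin <= kappa (z, u)) ->
  forall mu : probability (ZB R dX dA) R,
  mu (X `*` A : set (ZB R dX dA)) = 1%E ->
  let Z := X `*` A in
  let K := smooth Z kappa mu in
  let Tmu := fun Q => K (bellman gamma A W psi f r Q) in
  (forall q1 q2, Cfun Z q1 -> Cfun Z q2 ->
     supnorm Z (K q1 \- K q2) <= supnorm Z (q1 \- q2)) /\
  (forall Q, Cfun Z Q -> Cfun Z (Tmu Q)) /\
  (forall Q1 Q2, Cfun Z Q1 -> Cfun Z Q2 ->
     supnorm Z (Tmu Q1 \- Tmu Q2) <= gamma * supnorm Z (Q1 \- Q2)) /\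
  (exists qstar, Cfun Z qstar /\ (forall z, Z z -> Tmu qstar z = qstar z) /\
     supnorm Z qstar <= 1 / (1 - gamma) /\
     (forall q, Cfun Z q -> (forall z, Z z -> Tmu q z = q z) ->
        forall z, Z z -> q z = qstar z)).
Proof.
(* positivity of kappa is implied by the lower bound kmin *)
move=> /andP[gamma_gt0 gamma_lt1] X0 cX A0 cA mW psiW cf fX cr r_le1 ck _ kmin_gt0
  kmin_le mu muZ Z K Tmu.
have cZ : compact Z by exact: compact_setX.
have Z0 : Z !=set0 by case: X0 => x Xx; case: A0 => a Aa; exists (x, a).
have gamma_ge0 := ltW gamma_gt0; have gamma01 : 0 <= gamma < 1 by rewrite gamma_ge0.
have K_cont := smooth_continuous cZ ck kmin_gt0 kmin_le muZ.
have K_dist := smooth_dist_le cZ ck kmin_gt0 kmin_le muZ.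
have K_norm := norm_smooth_le cZ ck kmin_gt0 kmin_le muZ.
have Bcont Q : Cfun Z Q -> Cfun Z (bellman gamma A W psi f r Q).
  exact: bellman_continuous.
have Tmu_cont Q : Cfun Z Q -> Cfun Z (Tmu Q) by move=> /Bcont /K_cont.
have Tmu_contr Q1 Q2 : Cfun Z Q1 -> Cfun Z Q2 ->
    supnorm Z (Tmu Q1 \- Tmu Q2) <= gamma * supnorm Z (Q1 \- Q2).
  move=> c1 c2; apply: supnorm_le Z0 _ => z Zz.
  apply: (K_dist _ _ _ _ (Bcont _ c1) (Bcont _ c2) _ Zz) => u Zu.
  by apply: bellman_dist_le => // v Zv; exact: Cfun_dist_le_supnorm.
have [qs cqs qs_fix] := Cfun_contraction_fixed_point cZ Z0 gamma01 Tmu_cont Tmu_contr.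
split.
  move=> q1 q2 c1 c2; apply: supnorm_le Z0 _ => z Zz.
  by apply: (K_dist _ _ _ _ c1 c2 _ Zz) => u Zu; exact: Cfun_dist_le_supnorm.
do 2![split => //]; exists qs; do 2![split => //]; split.
  apply: supnorm_le Z0 _ => z Zz; rewrite -qs_fix //.
  by apply: (K_norm _ _ _ (Bcont _ cqs) _ Zz) => u Zu; exact: norm_bellman_le.
move=> q cq q_fix.
exact: (Cfun_contraction_fixed_point_unique cZ gamma01 Tmu_contr cq cqs q_fix qs_fix).
Qed.
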